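(* Let $K$ be a (not necessarily commutative) field and $K[X]$ the polynomial ring over $K$ in a central indeterminate $X$. Then the projective line $\mathbb{P}(K[X])$ is connected and has infinite diameter.
   Context: For a ring $R$ with $1$, a pair $(a,b)\in R^2$ is admissible if it is the first row of an invertible $2\times2$ matrix over $R$; $\mathbb{P}(R)$ is the set of cyclic submodules $R(a,b)$ of the left module $R^2$ with $(a,b)$ admissible. Two points $R(a,b)$, $R(c,d)$ are distant iff $\begin{pmatrix}a&b\\c&d\end{pmatrix}$ is invertible. Connectedness, distance (least number of edges of a joining path) and diameter (supremum of distances) refer to the graph on $\mathbb{P}(R)$ whose edges are pairs of distant points. *)

From HB Require Import structures.
From mathcomp Require Import all_boot all_order all_algebra.
Set Implicit Arguments. Unset Strict Implicit. Unset Printing Implicit Defensive.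
Import GRing.Theory.
Local Open Scope ring_scope.

Section ProjLine.
Variable R : nzRingType.

Definition mx2 (a b c d : R) : 'M[R]_2 :=
  \matrix_(i < 2, j < 2)
    if i == 0 :> nat then (if j == 0 :> nat then a else b)
    else (if j == 0 :> nat then c else d).

Definition mx_invertible (M : 'M[R]_2) : Prop :=
  exists N : 'M[R]_2, M *m N = 1%:M /\ N *m M = 1%:M.

Definition admissible (a b : R) : Prop :=
  exists c d : R, mx_invertible (mx2 a b c d).

(* the cyclic submodule R(a,b) of the left module R^2 *)
Definition cyc (a b : R) : R * R -> Prop :=
  fun p => exists r : R, p = (r * a, r * b).

Definition is_point (S : R * R -> Prop) : Prop :=
  exists a b : R, admissible a b /\ S = cyc a b.

Definition distant (S T : R * R -> Prop) : Prop :=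
  exists a b c d : R, admissible a b /\ admissible c d /\
    S = cyc a b /\ T = cyc c d /\ mx_invertible (mx2 a b c d).

Definition path_len (n : nat) (S T : R * R -> Prop) : Prop :=
  exists s : nat -> (R * R -> Prop),
    s 0%N = S /\ s n = T /\ (forall i, (i < n)%N -> distant (s i) (s i.+1)).

Definition proj_line_connected : Prop :=
  forall S T, is_point S -> is_point T -> exists n, path_len n S T.

Definition proj_line_infinite_diameter : Prop :=
  forall n : nat, exists S T, is_point S /\ is_point T /\
    forall m, (m <= n)%N -> ~ path_len m S T.

End ProjLine.

From HB Require Import structures.
From mathcomp Require Import all_boot all_order all_algebra.
From mathcomp Require Import zify.
From Stdlib Require Import FunctionalExtensionality PropExtensionality.
Set Implicit Arguments. Unset Strict Implicit. Unset Printing Implicit Defensive.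
Import GRing.Theory.
Local Open Scope ring_scope.

(* Write E(t) for the elementary matrix [[t, 1]; [-1, 0]] and, for a list
   l = [t_1; ...; t_n], C(l) for the product E(t_1) ... E(t_n); the first row
   of C(l) is the pair of continuants of l.  The first row of E(t) M is t times
   the first row of M plus its second row, so for invertible M the points of
   M and of E(t) M are distant, and the point of C(l) is joined to R(1,0) by a
   path of length |l|.  Over a domain in which one-sided inverses are
   two-sided, every neighbour of the point of M is conversely of this form.

   Connectedness: by the Euclidean algorithm (right division by polynomials
   with invertible leading coefficient) every admissible pair is a unit
   multiple of a pair of continuants, so every point is joined to R(1,0).

   Infinite diameter: absorbing constant partial quotients into a constant
   invertible matrix B, every point at distance <= m from R(1,0) is the point
   of C(l) B with l made of nonconstant polynomials and |l| <= m.  Comparing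
   degrees of continuants shows that |l| is determined by the point, so the
   point of C([X; ...; X]) (n+1 factors) is at distance > n. *)

Section TwoByTwo.
Variable R : nzRingType.

Definition i0 : 'I_2 := @Ordinal 2 0 isT.
Definition i1 : 'I_2 := @Ordinal 2 1 isT.

Lemma ord2P (i : 'I_2) : i = i0 \/ i = i1.
Proof. by case: i => [[|[|i]]] hi; [left|right|by []]; apply: val_inj. Qed.

Lemma mx2_eta (M : 'M[R]_2) : M = mx2 (M i0 i0) (M i0 i1) (M i1 i0) (M i1 i1).
Proof.
by apply/matrixP => i j; rewrite mxE; case: (ord2P i) => ->; case: (ord2P j) => ->.
Qed.

Lemma mulmx2E (A B : 'M[R]_2) i j : (A *m B) i j = A i i0 * B i0 j + A i i1 * B i1 j.
Proof.
rewrite mxE !big_ord_recl big_ord0 addr0.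
by congr (_ * _ + _ * _); congr (_ _ _); apply: val_inj.
Qed.

Lemma mx2_mul (a b c d e f g h : R) :
  mx2 a b c d *m mx2 e f g h = mx2 (a*e+b*g) (a*f+b*h) (c*e+d*g) (c*f+d*h).
Proof. by rewrite [LHS]mx2_eta !mulmx2E !mxE. Qed.

Lemma mx2_one : (1%:M : 'M[R]_2) = mx2 1 0 0 1.
Proof. by apply/matrixP => i j; rewrite !mxE; case: (ord2P i) => ->; case: (ord2P j) => ->. Qed.

Lemma mx2_inj (a b c d a' b' c' d' : R) : mx2 a b c d = mx2 a' b' c' d' ->
  [/\ a = a', b = b', c = c' & d = d'].
Proof.
move=> e; have entry i j := congr1 (fun M : 'M[R]_2 => M i j) e.
by move: (entry i0 i0) (entry i0 i1) (entry i1 i0) (entry i1 i1); rewrite !mxE.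
Qed.

Lemma mx_invertible1 : mx_invertible (1%:M : 'M[R]_2).
Proof. by exists 1%:M; rewrite mulmx1. Qed.

Lemma mx_invertibleM (A B : 'M[R]_2) :
  mx_invertible A -> mx_invertible B -> mx_invertible (A *m B).
Proof.
move=> [NA [h1 h2]] [NB [h3 h4]]; exists (NB *m NA); split.
  by rewrite mulmxA -(mulmxA A) h3 mulmx1 h1.
by rewrite mulmxA -(mulmxA NB) h2 mulmx1 h4.
Qed.

Lemma mx2_invertibleP (a b c d : R) : mx_invertible (mx2 a b c d) <->
  exists e f g h, [/\ a*e+b*g = 1, a*f+b*h = 0, c*e+d*g = 0 & c*f+d*h = 1] /\
                  [/\ e*a+f*c = 1, e*b+f*d = 0, g*a+h*c = 0 & g*b+h*d = 1].
Proof.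
split.
  move=> [N [h1 h2]]; exists (N i0 i0), (N i0 i1), (N i1 i0), (N i1 i1).
  move: h1 h2; rewrite mx2_one [N]mx2_eta !mx2_mul !mxE /=.
  by move=> /mx2_inj [? ? ? ?] /mx2_inj [? ? ? ?].
move=> [e [f [g [h [[h1 h2 h3 h4] [h5 h6 h7 h8]]]]]].
by exists (mx2 e f g h); rewrite !mx2_mul mx2_one h1 h2 h3 h4 h5 h6 h7 h8.
Qed.

Definition elem_mx (t : R) : 'M[R]_2 := mx2 t 1 (-1) 0.

Lemma elem_mx_invertible t : mx_invertible (elem_mx t).
Proof.
apply/mx2_invertibleP; exists 0, (-1), 1, t; split; split;
  by rewrite ?mul0r ?mulr0 ?mul1r ?mulr1 ?mulrN1 ?mulN1r ?add0r ?addr0 ?opprK ?addNr ?addrN.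
Qed.

Lemma cyc_mem (a b : R) : cyc a b (a, b).
Proof. by exists 1; rewrite !mul1r. Qed.

Lemma cyc_eq (a b a' b' : R) : cyc a b = cyc a' b' -> exists r, a' = r * a /\ b' = r * b.
Proof. by move=> e; have := cyc_mem a' b'; rewrite -e => -[r [-> ->]]; exists r. Qed.

Lemma cyc_scale (k w a b : R) : w * k = 1 -> cyc (k * a) (k * b) = cyc a b.
Proof.
move=> hw; apply: functional_extensionality => p; apply: propositional_extensionality.
split => -[r ->]; first by exists (r * k); rewrite !mulrA.
by exists (r * w); rewrite !mulrA -(mulrA r w k) hw mulr1.
Qed.

Lemma admissible_neq0 (a b : R) : admissible a b -> a = 0 -> b = 0 -> False.
Proof.
move=> [c [d /mx2_invertibleP [e [f [g [h [[h1 _ _ _] _]]]]]]] ea eb.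
by move: h1; rewrite ea eb !mul0r addr0 => /eqP; rewrite eq_sym oner_eq0.
Qed.

Definition pt (M : 'M[R]_2) := cyc (M i0 i0) (M i0 i1).

Lemma pt_point (M : 'M[R]_2) : mx_invertible M -> is_point (pt M).
Proof.
move=> hM; exists (M i0 i0), (M i0 i1); split => //.
by exists (M i1 i0), (M i1 i1); rewrite -mx2_eta.
Qed.

Lemma pt_elem_mxM t (M : 'M[R]_2) :
  pt (elem_mx t *m M) = cyc (t * M i0 i0 + M i1 i0) (t * M i0 i1 + M i1 i1).
Proof. by rewrite /pt !mulmx2E !mxE /= !mul1r. Qed.

Lemma pt_scale_row (A A' Y : 'M[R]_2) (k w : R) : w * k = 1 ->
  A i0 i0 = k * A' i0 i0 -> A i0 i1 = k * A' i0 i1 -> pt (A *m Y) = pt (A' *m Y).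
Proof.
by move=> wk h0 h1; rewrite /pt !mulmx2E h0 h1 -!mulrA -!mulrDr (cyc_scale _ _ wk).
Qed.

Lemma distant_sym (S T : R * R -> Prop) : distant S T -> distant T S.
Proof.
move=> [a [b [c [d [ha [hc [-> [-> /mx2_invertibleP hM]]]]]]]].
exists c, d, a, b; do 4 split => //.
move: hM => [e [f [g [h [[h1 h2 h3 h4] [h5 h6 h7 h8]]]]]].
by apply/mx2_invertibleP; exists f, e, h, g; split; split => //; rewrite addrC.
Qed.

Lemma distant_pt_elem_mxM t (M : 'M[R]_2) :
  mx_invertible M -> distant (pt M) (pt (elem_mx t *m M)).
Proof.
move=> hM.
exists (M i0 i0), (M i0 i1), ((elem_mx t *m M) i0 i0), ((elem_mx t *m M) i0 i1).
split; first by exists (M i1 i0), (M i1 i1); rewrite -mx2_eta.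
split; first exists ((elem_mx t *m M) i1 i0), ((elem_mx t *m M) i1 i1).
  by rewrite -mx2_eta; apply: mx_invertibleM (elem_mx_invertible t) hM.
do 2 split => //.
have -> : mx2 (M i0 i0) (M i0 i1) ((elem_mx t *m M) i0 i0) ((elem_mx t *m M) i0 i1)
          = mx2 1 0 t 1 *m M.
  apply/matrixP => i j; rewrite !mulmx2E !mxE.
  by case: (ord2P i) => ->; case: (ord2P j) => ->; rewrite /= ?mul1r ?mul0r ?addr0 ?add0r.
apply: mx_invertibleM _ hM; apply/mx2_invertibleP; exists 1, 0, (-t), 1; split; split;
  by rewrite ?mul0r ?mulr0 ?mul1r ?mulr1 ?add0r ?addr0 ?mulrN ?mulNr ?addNr ?addrN.
Qed.

Lemma path_len0 (S : R * R -> Prop) : path_len 0 S S.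
Proof. by exists (fun _ => S). Qed.

Lemma path_lenS n (S T U : R * R -> Prop) :
  path_len n S T -> distant T U -> path_len n.+1 S U.
Proof.
move=> [s [s0 [sn hs]]] hTU.
exists (fun i => if i == n.+1 then U else s i); rewrite /= eqxx; do 2 split => //.
move=> i hi; rewrite eqSS; case: (eqVneq i n) => [->|hin].
  by rewrite (ltn_eqF (ltnSn n)) sn.
rewrite (ltn_eqF hi); apply: hs; lia.
Qed.

Lemma path_len_rev n (S T : R * R -> Prop) : path_len n S T -> path_len n T S.
Proof.
move=> [s [s0 [sn hs]]]; exists (fun i => s (n - i)%N); rewrite subn0 subnn.
split => //; split => // i hi; apply: distant_sym.
have -> : (n - i = (n - i.+1).+1)%N by lia.
apply: hs; lia.
Qed.

Lemma path_len_cat n m (S T U : R * R -> Prop) :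
  path_len n S T -> path_len m T U -> path_len (n + m) S U.
Proof.
elim: m U => [|m IH] U; first by rewrite addn0 => h [s [s0 [sm _]]]; rewrite -sm s0.
move=> hST [s [s0 [sm hs]]].
have hTs : path_len m T (s m) by exists s; split => //; split => // i hi; apply: hs; lia.
by rewrite addnS; apply: path_lenS (IH _ hST hTs) _; rewrite -sm; apply: hs.
Qed.

Definition chain_mx (l : seq R) : 'M[R]_2 := foldr (fun t M => elem_mx t *m M) 1%:M l.
Definition contP (l : seq R) : R := chain_mx l i0 i0.
Definition contQ (l : seq R) : R := chain_mx l i0 i1.

Lemma chain_mx_invertible l : mx_invertible (chain_mx l).
Proof.
elim: l => [|t l IH] /=; [exact: mx_invertible1 | exact: mx_invertibleM (elem_mx_invertible t) IH].
Qed.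

Lemma cont_nil : contP [::] = 1 /\ contQ [::] = 0.
Proof. by rewrite /contP /contQ /= !mxE. Qed.

Lemma cont_rcons l s : contP (rcons l s) = contP l * s - contQ l /\ contQ (rcons l s) = contP l.
Proof.
rewrite /contP /contQ; have -> : chain_mx (rcons l s) = chain_mx l *m elem_mx s.
  by elim: l => [|t l IH] /=; [rewrite mul1mx mulmx1 | rewrite IH mulmxA].
by rewrite !mulmx2E !mxE /= mulrN1 mulr1 mulr0 addr0.
Qed.

Lemma path_len_chain l : path_len (size l) (pt 1%:M) (pt (chain_mx l)).
Proof.
elim: l => [|t l IH] /=; first exact: path_len0.
exact: path_lenS IH (distant_pt_elem_mxM t (chain_mx_invertible l)).
Qed.

End TwoByTwo.

Section NoZeroDivisors.
Variable R : nzRingType.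
Hypothesis mulR_eq0 : forall x y : R, x * y = 0 -> x = 0 \/ y = 0.
Hypothesis dedekind_finite : forall x y : R, x * y = 1 -> y * x = 1.

Lemma distant_cyc_neighbour (a b c d : R) Q : mx_invertible (mx2 a b c d) ->
  distant (cyc a b) Q -> exists t, Q = cyc (t * a + c) (t * b + d).
Proof.
move=> /mx2_invertibleP [e [f [g [h [_ [h5 h6 h7 h8]]]]]].
move=> [a' [b' [c' [d' [ha' [_ [e1 [-> hM']]]]]]]].
move: hM' => /mx2_invertibleP [p11 [p12 [p21 [p22 [[_ k2 _ k4] _]]]]].
have [r [ea eb]] := cyc_eq e1.
(* coordinates of (c', d') in the basis formed by the rows of [[a, b]; [c, d]] *)
set t0 := c' * e + d' * g; set v := c' * f + d' * h.
have ec : c' = t0 * a + v * c.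
  by rewrite /t0 /v !mulrDl -!mulrA addrACA -!mulrDr h5 h7 mulr1 mulr0 addr0.
have ed : d' = t0 * b + v * d.
  by rewrite /t0 /v !mulrDl -!mulrA addrACA -!mulrDr h6 h8 mulr1 mulr0 add0r.
clearbody t0 v.
have q12 : a * p12 + b * p22 = 0.
  have : r * (a * p12 + b * p22) = 0 by rewrite mulrDr !mulrA -ea -eb.
  case/mulR_eq0 => // r0; exfalso; apply: (admissible_neq0 ha'); by rewrite ?ea ?eb r0 mul0r.
(* hence the coefficient v of the second row is invertible *)
have hv : v * (c * p12 + d * p22) = 1.
  by rewrite -k4 ec ed !mulrDl -!mulrA addrACA -!mulrDr q12 mulr0 add0r.
exists ((c * p12 + d * p22) * t0).
by rewrite ec ed -[in RHS](cyc_scale _ _ (dedekind_finite hv)) !mulrDr !mulrA hv !mul1r.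
Qed.

Lemma distant_pt_neighbour (M : 'M[R]_2) Q : mx_invertible M -> distant (pt M) Q ->
  exists t, Q = pt (elem_mx t *m M).
Proof.
move=> hM hd; rewrite [M]mx2_eta in hM.
by have [t ->] := distant_cyc_neighbour hM hd; exists t; rewrite pt_elem_mxM.
Qed.

Lemma cyc_eq_unit (a b a' b' : R) : a != 0 -> cyc a b = cyc a' b' ->
  exists u u', u' * u = 1 /\ a' = u * a /\ b' = u * b.
Proof.
move=> a0 e; have [u [ea' eb']] := cyc_eq e; have [u' [ea _]] := cyc_eq (esym e).
exists u, u'; split => //.
have : (u' * u - 1) * a = 0 by rewrite mulrBl mul1r -mulrA -ea' -ea subrr.
by case/mulR_eq0 => [/eqP|a00]; [rewrite subr_eq0 => /eqP | move/eqP: a0].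
Qed.

End NoZeroDivisors.

Section PolyOverDivisionRing.
Variable K : unitRingType.
Hypothesis hK : forall x : K, x != 0 -> x \is a GRing.unit.
Local Notation R := {poly K}.

Lemma lead_coef_lreg (p : R) : p != 0 -> GRing.lreg (lead_coef p).
Proof. by move=> p0; apply: mulrI; apply: hK; rewrite lead_coef_eq0. Qed.

Lemma polyM_eq0 (p q : R) : p * q = 0 -> p = 0 \/ q = 0.
Proof.
case: (eqVneq p 0) => [|p0 pq]; [by left | right].
by apply/eqP; rewrite -(mulrI_eq0 _ (lreg_lead (lead_coef_lreg p0))) pq.
Qed.

Lemma size_polyM (p q : R) : p != 0 -> q != 0 -> size (p * q) = (size p + size q).-1.
Proof.
move=> p0 q0; apply: size_proper_mul.
by rewrite (mulrI_eq0 _ (lead_coef_lreg p0)) lead_coef_eq0.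
Qed.

Lemma size_mul_lt_eq0 (p y : R) : (size (p * y)%R < size p)%N -> y = 0.
Proof.
case: (eqVneq p 0) => [->|p0]; first by rewrite size_poly0.
case: (eqVneq y 0) => // y0; rewrite size_polyM //.
by move: p0 y0; rewrite -!size_poly_gt0 => *; lia.
Qed.

Lemma size_mul_le1 (p x : R) : (size x <= 1)%N -> (size (p * x)%R <= size p)%N.
Proof. by move=> hx; apply: leq_trans (size_polyMleq _ _) _; lia. Qed.

Lemma size1_inv (c : R) : size c = 1%N -> exists w, c * w = 1 /\ w * c = 1 /\ size w = 1%N.
Proof.
move=> hc; set a := c`_0; have ec : c = a%:P by apply: size1_polyC; rewrite hc.
have a0 : a != 0 by rewrite -polyC_eq0 -ec -size_poly_gt0 hc.
exists a^-1%:P; rewrite ec -!polyCM mulrV ?mulVr ?hK //.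
by rewrite size_polyC invr_eq0 a0.
Qed.

Lemma size1_mul (p c : R) : size c = 1%N -> size (p * c) = size p /\ size (c * p) = size p.
Proof.
move=> hc; case: (eqVneq p 0) => [->|p0]; first by rewrite mul0r mulr0 size_poly0.
have c0 : c != 0 by rewrite -size_poly_gt0 hc.
by rewrite !size_polyM // hc addn1 add1n.
Qed.

Lemma mul_eq1_size1 (x y : R) : x * y = 1 -> size x = 1%N /\ size y = 1%N.
Proof.
move=> xy; have x0 : x != 0 by apply: contra_eq_neq xy => ->; rewrite mul0r eq_sym oner_neq0.
have y0 : y != 0 by apply: contra_eq_neq xy => ->; rewrite mulr0 eq_sym oner_neq0.
have := size_polyM x0 y0; rewrite xy size_poly1.
by move: x0 y0; rewrite -!size_poly_gt0 => *; lia.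
Qed.

Lemma poly_dedekind_finite (x y : R) : x * y = 1 -> y * x = 1.
Proof.
move=> xy; have [w [_ [wx _]]] := size1_inv (mul_eq1_size1 xy).1.
suff -> : y = w by [].
by rewrite -[y]mul1r -wx -mulrA xy mulr1.
Qed.

(* One step of right division: cancel the leading term of a by b t. *)
Lemma poly_rdiv_step (a b : R) : b != 0 -> (size b <= size a)%N ->
  exists t, (size (a - b * t)%R < size a)%N.
Proof.
move=> hb hab; have sb : (0 < size b)%N by rewrite size_poly_gt0.
have sa : (0 < size a)%N by apply: leq_trans hab.
set k := (size a - size b)%N; set c := (lead_coef b)^-1 * lead_coef a.
exists (c%:P * 'X^k).
suff : (size (a - b * (c%:P * 'X^k))%R <= (size a).-1)%N by rewrite -[(size a)](prednK sa) ltnS.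
apply/leq_sizeP => j hj; rewrite coefB mulrA coefMXn coefMC.
have -> : (j < k)%N = false by apply/negbTE; rewrite -leqNgt /k; lia.
case: (ltngtP j (size a).-1) => hj2.
- by move: hj; rewrite leqNgt hj2.
- have h1 : (size a <= j)%N by lia.
  have h2 : (size b <= j - k)%N by rewrite /k; lia.
  by rewrite (nth_default _ h1) (nth_default _ h2) mul0r subr0.
- have -> : (j - k = (size b).-1)%N by rewrite /k; lia.
  rewrite -!lead_coefE hj2 -lead_coefE /c mulrA mulrV ?mul1r ?subrr //.
  by apply: hK; rewrite lead_coef_eq0.
Qed.

Lemma poly_rdiv (a b : R) : b != 0 -> exists t r, a = b * t + r /\ (size r < size b)%N.
Proof.
move=> hb; have [n] := ubnP (size a); elim: n a => // n IH a ha.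
case: (ltnP (size a) (size b)) => hab; first by exists 0, a; rewrite mulr0 add0r.
have [t ht] := poly_rdiv_step hb hab.
have [t' [r [e hr]]] := IH (a - b * t) (leq_trans ht (ltnSE ha)).
by exists (t + t'), r; split => //; rewrite mulrDr -addrA -e addrC subrK.
Qed.

Lemma unimodular_continuants n (a b e f : R) : (size b < n)%N -> a * e + b * f = 1 ->
  exists l g g', g' * g = 1 /\ a = g * contP l /\ b = g * contQ l.
Proof.
elim: n a b e f => // n IH a b e f hb h.
case: (eqVneq b 0) => [b0|b0].
  move: h; rewrite b0 mul0r addr0 => h.
  exists [::], a, e; have [-> ->] := @cont_nil R.
  by rewrite (poly_dedekind_finite h) mulr1 mulr0.
have [t [r [ea hr]]] := poly_rdiv a b0.
have h' : b * (t * e + f) + (- r) * (- e) = 1.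
  by rewrite mulrNN mulrDr mulrA addrAC -mulrDl -ea.
have hr' : (size (- r) < n)%N by rewrite size_polyN; exact: leq_trans hr hb.
have [l [g [g' [gg [e1 e2]]]]] := IH b (- r) _ _ hr' h'.
exists (rcons l t), g, g'; have [-> ->] := cont_rcons l t.
by rewrite mulrBr mulrA -e1 -e2 opprK.
Qed.

Lemma point_chain_mx (S : R * R -> Prop) : is_point S -> exists l, S = pt (chain_mx l).
Proof.
move=> [a [b [[c [d /mx2_invertibleP [e [f [g [h [[h1 _ _ _] _]]]]]]] ->]]].
have [l [k [k' [kk [ea eb]]]]] := unimodular_continuants (ltnSn (size b)) h1.
by exists l; rewrite ea eb (cyc_scale _ _ kk).
Qed.

Lemma poly_proj_line_connected : proj_line_connected R.
Proof.
move=> S T hS hT.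
have [l1 ->] := point_chain_mx hS; have [l2 ->] := point_chain_mx hT.
exists (size l1 + size l2)%N; apply: (@path_len_cat _ _ _ _ (pt 1%:M)).
  exact/path_len_rev/path_len_chain.
exact: path_len_chain.
Qed.

Definition reduced (l : seq R) : bool := all (fun s : R => 1 < size s)%N l.

Lemma size_contQ_lt l : reduced l -> (size (contQ l) < size (contP l))%N.
Proof.
elim/last_ind: l => [|l s IH].
  by have [-> ->] := @cont_nil R; rewrite size_poly0 size_poly1.
rewrite /reduced all_rcons => /andP [hs /IH hl]; have [-> ->] := cont_rcons l s.
have P0 : contP l != 0 by rewrite -size_poly_gt0; lia.
have s0 : s != 0 by rewrite -size_poly_gt0; lia.
have hPs : (size (contP l) < size (contP l * s)%R)%N.
  by rewrite size_polyM //; set x := size (contP l); lia.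
by rewrite size_polyDl ?size_polyN; lia.
Qed.

Lemma size_contQ_eq0 l : reduced l -> (size (contQ l) == 0%N) = (size l == 0%N).
Proof.
case/lastP: l => [|l s]; first by have [_ ->] := @cont_nil R; rewrite size_poly0.
rewrite /reduced all_rcons size_rcons => /andP [_ /size_contQ_lt hl].
by have [_ ->] := cont_rcons l s; apply/negbTE; rewrite -lt0n; lia.
Qed.

Lemma size1_scale (mu d p q : R) : size mu = 1%N -> size d = 1%N ->
  mu * p = q * d -> size p = size q.
Proof. by move=> hmu hd e; rewrite -(size1_mul p hmu).2 e (size1_mul q hd).1. Qed.

Lemma subrBBK (V : zmodType) (x y z w : V) : x - (y - w) - z - w = x - y - z.
Proof. by rewrite opprB addrA (addrAC x w) (addrAC (x - y) w) addrK. Qed.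

(* One step of the comparison of two continuant pairs: if (P0 s0 - Q0, P0) is
   a constant combination of (P s - Q, P) of a lower triangular shape, then
   comparing degrees forces the same shape one step down. *)
Lemma continuant_step (P Q P0 Q0 s s0 mu a c d : R) :
  (size Q < size P)%N -> (size Q0 < size P0)%N ->
  size mu = 1%N -> size a = 1%N -> size d = 1%N ->
  mu * P0 = P * d -> mu * (P0 * s0 - Q0) = (P * s - Q) * a + P * c ->
  mu * Q0 = Q * a.
Proof.
move=> hQ hQ0 hmu ha hd e1 e2.
have sP : size P0 = size P := size1_scale hmu hd e1.
have eQ0 : mu * Q0 = P * d * s0 - (P * s - Q) * a - P * c.
  by rewrite -e1 -addrA -opprD -e2 mulrBr mulrA opprB addrC subrK.
have key : mu * Q0 - Q * a = P * (d * s0 - s * a - c).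
  by rewrite eQ0 mulrBl !mulrBr !mulrA subrBBK.
have small : (size (mu * Q0 - Q * a)%R < size P)%N.
  apply: leq_ltn_trans (size_polyD _ _) _.
  by rewrite size_polyN gtn_max (size1_mul _ hmu).2 (size1_mul _ ha).1 -{1}sP hQ0 hQ.
have z : d * s0 - s * a - c = 0 by apply: (@size_mul_lt_eq0 P); rewrite -key.
by move: key; rewrite z mulr0 => /eqP; rewrite subr_eq0 => /eqP.
Qed.

Lemma continuant_unique l : forall l0 (mu a c d : R), reduced l -> reduced l0 ->
  size mu = 1%N -> size a = 1%N -> size d = 1%N ->
  mu * contP l0 = contP l * a + contQ l * c -> mu * contQ l0 = contQ l * d ->
  size l = size l0.
Proof.
elim/last_ind: l => [|l s IH] l0 mu a c d hl hl0 hmu ha hd eP eQ.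
  have := size_contQ_eq0 hl0.
  by rewrite (size1_scale hmu hd eQ) (size_contQ_eq0 hl) /= => /esym/eqP ->.
case/lastP: l0 hl0 eP eQ => [|l0 s0] hl0 eP eQ.
  have := size_contQ_eq0 hl.
  by rewrite -(size1_scale hmu hd eQ) (size_contQ_eq0 hl0) size_rcons.
move: hl hl0; rewrite /reduced !all_rcons => /andP [_ hl] /andP [_ hl0].
move: eP eQ; have [-> ->] := cont_rcons l s; have [-> ->] := cont_rcons l0 s0 => eP eQ.
rewrite !size_rcons; congr _.+1; apply: (IH l0 mu d 0 a) => //.
  by rewrite mulr0 addr0.
exact: continuant_step (size_contQ_lt hl) (size_contQ_lt hl0) hmu ha hd eQ eP.
Qed.

Definition const_mx (B : 'M[R]_2) : Prop := forall i j, (size (B i j) <= 1)%N.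

Lemma const_mx1 : const_mx 1%:M.
Proof. by move=> i j; rewrite mxE; case: (i == j); rewrite ?size_poly1 ?size_poly0. Qed.

Lemma const_mx_elem (t : R) (B : 'M[R]_2) :
  (size t <= 1)%N -> const_mx B -> const_mx (elem_mx t *m B).
Proof.
move=> ht hB i j.
have le1M (x y : R) : (size x <= 1)%N -> (size y <= 1)%N -> (size (x * y)%R <= 1)%N.
  by move=> hx hy; apply: leq_trans (size_polyMleq x y) _; lia.
rewrite mulmx2E !mxE; apply: leq_trans (size_polyD _ _) _; rewrite geq_max.
by case: (ord2P i) => -> /=; rewrite !le1M // ?size_polyN ?size_poly1 ?size_poly0.
Qed.

Definition normal_form (T : R * R -> Prop) (m : nat) : Prop :=
  exists l B, [/\ reduced l, (size l <= m)%N, const_mx B, mx_invertible B &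
                  T = pt (chain_mx l *m B)].

(* A constant elementary factor is absorbed: into B when l is empty, and into
   the first partial quotient otherwise, since E(t) E(s) and E(s - t^-1) have
   proportional first rows (or E(0) E(s) has first row -(1, 0)). *)
Lemma normal_form_absorb (t : R) (l : seq R) (B : 'M[R]_2) :
  (size t <= 1)%N -> reduced l -> const_mx B -> mx_invertible B ->
  normal_form (pt (elem_mx t *m (chain_mx l *m B))) (size l).
Proof.
move=> ht hl hB iB; case: l hl => [|s l] hl.
  exists [::], (elem_mx t *m B); split => //; first exact: const_mx_elem.
    exact: mx_invertibleM (elem_mx_invertible t) iB.
  by rewrite /= !mul1mx.
move: hl; rewrite /reduced /= => /andP [hs hl].
rewrite /= -mulmxA mulmxA.
have [E00 E01] : (elem_mx t *m elem_mx s) i0 i0 = t * s - 1 /\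
                 (elem_mx t *m elem_mx s) i0 i1 = t.
  by rewrite !mulmx2E !mxE /= mulr1 mulr0 mulrN1 addr0.
case: (eqVneq t 0) => [t0|t0].
  have m1 : (-1 : R) * (-1) = 1 by rewrite mulrNN mulr1.
  exists l, B; split => //; rewrite (pt_scale_row (A' := 1%:M) _ m1) ?mul1mx //.
    by rewrite E00 t0 mul0r sub0r !mxE mulr1.
  by rewrite E01 t0 !mxE mulr0.
have [w [tw [wt sw]]] : exists w, t * w = 1 /\ w * t = 1 /\ size w = 1%N.
  by apply: size1_inv; apply/eqP; rewrite eqn_leq ht size_poly_gt0.
exists (s - w :: l), B; split => //.
  by rewrite /reduced /= hl andbT size_polyDl // size_polyN sw.
rewrite (pt_scale_row (A' := elem_mx (s - w)) _ wt) ?mulmxA //.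
  by rewrite E00 !mxE mulrBr tw.
by rewrite E01 !mxE mulr1.
Qed.

Lemma normal_form_step (T T' : R * R -> Prop) m :
  normal_form T m -> distant T T' -> normal_form T' m.+1.
Proof.
move=> [l [B [hl hm hB iB ->]]] hd.
have iM := mx_invertibleM (chain_mx_invertible l) iB.
have [t ->] := distant_pt_neighbour polyM_eq0 poly_dedekind_finite iM hd.
case: (ltnP 1 (size t)) => ht.
  by exists (t :: l), B; split => //=; [apply/andP | rewrite mulmxA].
have [l' [B' [hl' hm' hB' iB' ->]]] := normal_form_absorb ht hl hB iB.
by exists l', B'; split => //; lia.
Qed.

Lemma normal_form_path m (T : R * R -> Prop) : path_len m (pt 1%:M) T -> normal_form T m.
Proof.
move=> [s [s0 [<- hs]]].
suff : forall i, (i <= m)%N -> normal_form (s i) i by apply.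
elim => [|i IH] hi.
  rewrite s0; exists [::], 1%:M; split => //.
  - exact: const_mx1.
  - exact: mx_invertible1.
  - by rewrite mul1mx.
exact: normal_form_step (IH (ltnW hi)) (hs _ hi).
Qed.

Lemma size_comb (p q x y : R) : (size q < size p)%N -> (size x <= 1)%N -> (size y <= 1)%N ->
  (size (p * x + q * y)%R <= size p)%N /\ (size x = 1%N -> size (p * x + q * y) = size p).
Proof.
move=> hqp hx hy; have hqy := size_mul_le1 q hy; split.
  apply: leq_trans (size_polyD _ _) _.
  by rewrite geq_max (size_mul_le1 p hx) (leq_trans hqy (ltnW hqp)).
move=> hx1; rewrite size_polyDl ?(size1_mul p hx1).1 //.
exact: leq_ltn_trans hqy hqp.
Qed.

Lemma chain_pt_unique (l l0 : seq R) (B : 'M[R]_2) : reduced l -> reduced l0 -> const_mx B ->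
  mx_invertible B -> pt (chain_mx l *m B) = pt (chain_mx l0) -> size l = size l0.
Proof.
move=> hl hl0 hB iB e.
have gl := size_contQ_lt hl; have gl0 := size_contQ_lt hl0.
have P00 : contP l0 != 0 by rewrite -size_poly_gt0; lia.
have e' : cyc (contP l0) (contQ l0) =
  cyc (contP l * B i0 i0 + contQ l * B i1 i0) (contP l * B i0 i1 + contQ l * B i1 i1).
  by move: e; rewrite /pt !mulmx2E => <-.
have [u [u' [uu [eP eQ]]]] := cyc_eq_unit polyM_eq0 P00 e'.
have hu := (mul_eq1_size1 uu).2.
(* B is lower triangular: B01 != 0 would make the second coordinate the larger one *)
have B01 : B i0 i1 = 0.
  case: (eqVneq (B i0 i1) 0) => // nzB; have hB1 : size (B i0 i1) = 1%N.
    by apply/eqP; rewrite eqn_leq hB size_poly_gt0.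
  have [_ sY] := size_comb gl (hB i0 i1) (hB i1 i1).
  have [sX _] := size_comb gl (hB i0 i0) (hB i1 i0).
  move: sX (sY hB1); rewrite eP eQ (size1_mul _ hu).2 (size1_mul _ hu).2 => sX sY'.
  by have := leq_trans gl0 sX; rewrite sY' ltnn.
(* so its diagonal entries are invertible, i.e. nonzero constants *)
move: iB; rewrite [B]mx2_eta => /mx2_invertibleP [e0 [f0 [g0 [h0 [[h1 _ _ _] [_ _ _ h8]]]]]].
move: h1 h8; rewrite B01 mul0r mulr0 add0r addr0 => h1 h8.
apply: (continuant_unique hl hl0 hu (mul_eq1_size1 h1).1 (mul_eq1_size1 h8).2).
  exact: esym eP.
by rewrite -eQ B01 mulr0 add0r.
Qed.

Lemma reduced_nseqX n : reduced (nseq n 'X).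
Proof. by elim: n => //= n ->; rewrite size_polyX. Qed.

Lemma poly_proj_line_infinite_diameter : proj_line_infinite_diameter R.
Proof.
move=> n; exists (pt 1%:M), (pt (chain_mx (nseq n.+1 'X))).
split; first exact: pt_point (@mx_invertible1 R).
split; first exact: pt_point (chain_mx_invertible _).
move=> m hm /normal_form_path [l [B [hl hlm hB iB e]]].
have := chain_pt_unique hl (reduced_nseqX n.+1) hB iB (esym e).
by rewrite size_nseq; lia.
Qed.

End PolyOverDivisionRing.

Unset Implicit Arguments.
Set Strict Implicit.

Theorem mainTheorem12 (K : unitRingType)
  (hK : forall x : K, x != 0 -> x \is a GRing.unit) :
  proj_line_connected {poly K} /\ proj_line_infinite_diameter {poly K}.
Proof.
split; [exact: poly_proj_line_connected hK | exact: poly_proj_line_infinite_diameter hK].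
Qed.
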